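(* For every $k\ge1$, $\mathfrak{L}(\mathbb{Z}^k)^w_{O(n)} \subsetneq \mathfrak{L}(\mathbb{Z}^{k+1})^w_{O(n)}$.
   Context: For a group $G$ with identity $e$, a $G$-automaton is a tuple $(Q,\Sigma,G,\delta,q_0,Q_a)$ where $Q$ is a finite set of states, $\Sigma$ a finite input alphabet, $q_0\in Q$ the initial state, $Q_a\subseteq Q$ the accepting states, and $\delta$ assigns to each $(q,\sigma)\in Q\times(\Sigma\cup\{\varepsilon\})$ a finite set of pairs $(q',m)\in Q\times G$. The register holds an element of $G$, initially $e$; using a transition $(q',m)\in\delta(q,\sigma)$ (one step) the automaton reads $\sigma$ (or nothing), moves to $q'$ and replaces the register content $x$ by $xm$. A word is accepted if some computation reads it entirely and ends in an accepting state with register equal to $e$. A $G$-automaton recognizing $\mathtt{L}$ is weakly $t(n)$ time-bounded if every $x\in\mathtt{L}$ with $|x|=n$ has an accepting computation of at most $t(n)$ steps; $\mathfrak{L}(G)^w_{O(n)}$ is the class of languages recognized by weakly $t(n)$ time-bounded $G$-automata for some $t(n)=O(n)$. $\mathbb{Z}^k$ is the additive group of integer vectors of dimension $k$. *)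

(* G-automata for an additive (abelian) group G : zmodType;
   the register update x |-> x m is written x + m. Z^k is 'rV[int]_k. *)
From HB Require Import structures.
From mathcomp Require Import all_boot all_order all_algebra.
Set Implicit Arguments. Unset Strict Implicit. Unset Printing Implicit Defensive.
Import GRing.Theory.
Local Open Scope ring_scope.

Record gautomaton (G : zmodType) (Sigma : finType) := GAutomaton {
  gstate : finType;
  ginit : gstate;
  gacc : {set gstate};
  gdelta : gstate -> option Sigma -> seq (gstate * G)
}.

Arguments ginit {G Sigma} g.
Arguments gacc {G Sigma} g.
Arguments gdelta {G Sigma} g _ _.

Inductive grun (G : zmodType) (Sigma : finType) (A : gautomaton G Sigma) :
  gstate A -> G -> seq Sigma -> nat -> gstate A -> G -> Prop :=
| grun_nil q x : @grun G Sigma A q x [::] 0 q x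
| grun_eps q x w n q1 m q' x' :
    (q1, m) \in gdelta A q None -> @grun G Sigma A q1 (x + m) w n q' x' ->
    @grun G Sigma A q x w n.+1 q' x'
| grun_read q x a w n q1 m q' x' :
    (q1, m) \in gdelta A q (Some a) -> @grun G Sigma A q1 (x + m) w n q' x' ->
    @grun G Sigma A q x (a :: w) n.+1 q' x'.

Arguments grun {G Sigma} A _ _ _ _ _ _.

Definition gaccepts_in (G : zmodType) (Sigma : finType) (A : gautomaton G Sigma)
  (w : seq Sigma) (n : nat) : Prop :=
  exists q', grun A (ginit A) 0 w n q' 0 /\ q' \in gacc A.

Definition gaccepts (G : zmodType) (Sigma : finType) (A : gautomaton G Sigma)
  (w : seq Sigma) : Prop := exists n, gaccepts_in A w n.

Definition grecognizes (G : zmodType) (Sigma : finType) (A : gautomaton G Sigma)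
  (L : seq Sigma -> Prop) : Prop := forall w, L w <-> gaccepts A w.

Definition weakly_time_bounded (G : zmodType) (Sigma : finType)
  (A : gautomaton G Sigma) (L : seq Sigma -> Prop) (t : nat -> nat) : Prop :=
  grecognizes A L /\
  forall w, L w -> exists n, (n <= t (size w))%N /\ gaccepts_in A w n.

Definition bigO_n (t : nat -> nat) : Prop :=
  exists c N : nat, forall n, (N <= n)%N -> (t n <= c * n)%N.

Definition in_Lw_On (G : zmodType) (Sigma : finType) (L : seq Sigma -> Prop) : Prop :=
  exists (A : gautomaton G Sigma) (t : nat -> nat),
    bigO_n t /\ weakly_time_bounded A L t.

(* A Z^k-automaton is simulated step by step by a Z^(k+1)-automaton through
   the embedding v |-> (0, v) of Z^k into Z^(k+1).
   Over the letters a_0, ..., a_k, b_0, ..., b_k, the words in which every a_i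
   occurs as often as b_i are recognized in real time with Z^(k+1): the
   register counts |w|_(a_i) - |w|_(b_i) in coordinate i.  A linear-time
   Z^k-automaton cannot recognize them: on the words
   a^p b^p = a_0^(p_0) ... a_k^(p_k) b_0^(p_0) ... b_k^(p_k) with all p_i <= n,
   the register after reading a^p has coordinates O(n), so only O(n^k)
   configurations can occur there, whereas there are (n+1)^(k+1) choices
   of p.  Two distinct p, p' thus meet in the same
   configuration, and the automaton also accepts the unbalanced a^p b^p'. *)
From mathcomp Require Import all_boot all_order all_algebra zify.
From Stdlib Require Import ClassicalEpsilon.
Set Implicit Arguments. Unset Strict Implicit.
Import GRing.Theory.

Section Runs.
Variables (G : zmodType) (Sigma : finType) (A : gautomaton G Sigma).

Lemma grun_cat q x u n1 qm xm v n2 q' x' :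
  grun A q x u n1 qm xm -> grun A qm xm v n2 q' x' ->
  grun A q x (u ++ v) (n1 + n2) q' x'.
Proof.
elim=> [//|q0 x0 w n q1 m q2 x2 Hm _ IH|q0 x0 a w n q1 m q2 x2 Hm _ IH] Hv.
- by rewrite addSn; apply: grun_eps Hm (IH Hv).
- by rewrite addSn; apply: grun_read Hm (IH Hv).
Qed.

Lemma grun_split q x u v n q' x' :
  grun A q x (u ++ v) n q' x' ->
  exists n1 n2 qm xm, [/\ n = (n1 + n2)%N, grun A q x u n1 qm xm &
                          grun A qm xm v n2 q' x'].
Proof.
move Ew: (u ++ v) => w R; elim: R u Ew =>
  [q0 x0|q0 x0 w0 n0 q1 m q2 x2 Hm _ IH|q0 x0 a w0 n0 q1 m q2 x2 Hm R IH] u Ew.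
- case: u Ew => // /= ->.
  by exists 0%N, 0%N, q0, x0; split=> //; apply: grun_nil.
- have [n1 [n2 [qm [xm [-> R1 R2]]]]] := IH u Ew.
  by exists n1.+1, n2, qm, xm; split=> //; apply: grun_eps Hm R1.
- case: u Ew => [|b u] /= Ew.
  + subst v; exists 0%N, n0.+1, q0, x0; split=> //; first exact: grun_nil.
    exact: grun_read Hm R.
  + case: Ew => -> Ew; have [n1 [n2 [qm [xm [-> R1 R2]]]]] := IH u Ew.
    by exists n1.+1, n2, qm, xm; split=> //; apply: grun_read Hm R1.
Qed.

End Runs.

Section Embedding.
Local Open Scope ring_scope.
Variables (G H : zmodType) (f : G -> H).
Hypotheses (fD : {morph f : x y / x + y}) (f_inj : injective f).
Variable Sigma : finType.

Let f0 : f 0 = 0.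
Proof. by apply: (@addrI _ (f 0)); rewrite -fD !addr0. Qed.

Definition map_gautomaton (A : gautomaton G Sigma) : gautomaton H Sigma :=
  @GAutomaton H Sigma (gstate A) (ginit A) (gacc A)
    (fun q o => [seq (p.1, f p.2) | p <- gdelta A q o]).

Variable A : gautomaton G Sigma.

Lemma grun_map q x w n q' x' :
  grun A q x w n q' x' -> grun (map_gautomaton A) q (f x) w n q' (f x').
Proof.
elim=> [q0 x0|q0 x0 w0 n0 q1 m q2 x2 Hm _ IH|q0 x0 a w0 n0 q1 m q2 x2 Hm _ IH].
- exact: grun_nil.
- apply: (@grun_eps _ _ (map_gautomaton A) _ _ _ _ q1 (f m)); last by rewrite -fD.
  by apply/mapP; exists (q1, m).
- apply: (@grun_read _ _ (map_gautomaton A) _ _ _ _ _ q1 (f m)); last by rewrite -fD.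
  by apply/mapP; exists (q1, m).
Qed.

Lemma grun_map_inv q y w n q' y' :
  grun (map_gautomaton A) q y w n q' y' ->
  forall x, y = f x -> exists2 x', y' = f x' & grun A q x w n q' x'.
Proof.
elim=> [q0 x0|q0 x0 w0 n0 q1 m q2 x2 Hm _ IH|q0 x0 a w0 n0 q1 m q2 x2 Hm _ IH]
  x Ex; subst; first by exists x; last exact: grun_nil.
- case/mapP: Hm => [[q3 m3]] Hm [Eq Em]; subst.
  have [x' -> R] := IH (x + m3) (esym (fD _ _)).
  by exists x'; last exact: grun_eps Hm R.
- case/mapP: Hm => [[q3 m3]] Hm [Eq Em]; subst.
  have [x' -> R] := IH (x + m3) (esym (fD _ _)).
  by exists x'; last exact: grun_read Hm R.
Qed.

Lemma gaccepts_in_map w n :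
  gaccepts_in (map_gautomaton A) w n <-> gaccepts_in A w n.
Proof.
split=> -[q' [R Hq]]; exists q'; split=> //.
- have [x' Ex' R'] := grun_map_inv R (esym f0).
  have x'0 : x' = 0 by apply: f_inj; rewrite -Ex' f0.
  by rewrite x'0 in R'.
- by have := grun_map R; rewrite f0.
Qed.

End Embedding.

Lemma in_Lw_On_injmorph (G H : zmodType) (f : G -> H) (Sigma : finType)
    (L : seq Sigma -> Prop) :
  {morph f : x y / (x + y)%R} -> injective f ->
  in_Lw_On G L -> in_Lw_On H L.
Proof.
move=> fD f_inj [A [t [Ht [recA timeA]]]].
have accE := gaccepts_in_map fD f_inj A.
exists (map_gautomaton f A), t; split=> //; split.
- by move=> w; rewrite recA; split=> -[n /accE]; exists n.
- by move=> w /timeA [n [tn /accE]]; exists n.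
Qed.

Definition row_shift (R : zmodType) k (v : 'rV[R]_k) : 'rV[R]_k.+1 :=
  row_mx (0 : 'rV[R]_1) v.

Lemma row_shiftD (R : zmodType) k : {morph @row_shift R k : u v / (u + v)%R}.
Proof.
by move=> u v; have := add_row_mx (0 : 'rV[R]_1) u 0 v; rewrite addr0 => /esym.
Qed.

Lemma row_shift_inj (R : zmodType) k : injective (@row_shift R k).
Proof. by move=> u v /(@eq_row_mx R 1 1 k) []. Qed.

Section Counter.
Local Open Scope ring_scope.
Variable m : nat.

Definition balanced (w : seq ('I_m + 'I_m)%type) : Prop :=
  forall i, count_mem (inl i) w = count_mem (inr i) w.

Definition letter_vec (a : ('I_m + 'I_m)%type) : 'rV[int]_m :=
  match a with inl i => delta_mx ord0 i | inr i => - delta_mx ord0 i end.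

Definition counter_gautomaton : gautomaton 'rV[int]_m ('I_m + 'I_m)%type :=
  @GAutomaton _ _ unit tt setT
    (fun _ o => if o is Some a then [:: (tt, letter_vec a)] else [::]).

Lemma letter_vec_sum_coord w j :
  (\sum_(a <- w) letter_vec a) ord0 j =
  (count_mem (inl j) w)%:Z - (count_mem (inr j) w)%:Z.
Proof.
elim: w => [|a w IH]; first by rewrite big_nil mxE.
rewrite big_cons mxE IH /=.
by case: a => i /=; rewrite ?mxE ?(inj_eq inl_inj) ?(inj_eq inr_inj) eqxx eq_sym;
  case: (i == j) => /=; lia.
Qed.

Lemma balancedE w : balanced w <-> \sum_(a <- w) letter_vec a = 0.
Proof.
split=> [bal_w | sum0 i].
- by apply/matrixP=> i j; rewrite [i]ord1 letter_vec_sum_coord bal_w mxE subrr.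
- apply/eqP; rewrite -eqz_nat -subr_eq0 -letter_vec_sum_coord.
  by rewrite sum0 mxE.
Qed.

Lemma grun_counter q x w n q' x' :
  grun counter_gautomaton q x w n q' x' ->
  n = size w /\ x' = x + \sum_(a <- w) letter_vec a.
Proof.
elim=> [q0 x0|//|q0 x0 a w0 n0 q1 m1 q2 x2 Hm _ [-> ->]].
- by rewrite big_nil addr0.
- by move: Hm; rewrite inE => /eqP [_ ->]; rewrite big_cons addrA.
Qed.

Lemma grun_counter_total x w :
  grun counter_gautomaton tt x w (size w) tt (x + \sum_(a <- w) letter_vec a).
Proof.
elim: w x => [|a w IH] x; first by rewrite big_nil addr0; apply: grun_nil.
apply: (@grun_read _ _ counter_gautomaton _ _ _ _ _ tt (letter_vec a)).
  by rewrite inE.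
by rewrite big_cons addrA; apply: IH.
Qed.

Lemma counter_gaccepts_inE w n :
  gaccepts_in counter_gautomaton w n <-> n = size w /\ balanced w.
Proof.
rewrite balancedE; split=> [[q' [/grun_counter [-> +] _]]|[-> sum0]].
- by rewrite add0r => <-.
- by exists tt; split=> //; have := grun_counter_total 0 w; rewrite sum0 addr0.
Qed.

Lemma balanced_in_Lw_On : in_Lw_On 'rV[int]_m balanced.
Proof.
exists counter_gautomaton, id; split; first by exists 1%N, 0%N => l; rewrite mul1n.
split=> [w|w bal_w]; last by exists (size w); rewrite counter_gaccepts_inE.
split=> [bal_w|[n /counter_gaccepts_inE []//]].
by exists (size w); rewrite counter_gaccepts_inE.
Qed.

End Counter.

Lemma bigO_n_affine (t : nat -> nat) :
  bigO_n t -> exists c D, forall l, (t l <= c * l + D)%N.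
Proof.
case=> c [N Ht]; exists c, (\max_(l < N) t l)%N => l.
case: (leqP N l) => [le_Nl|lt_lN]; first exact: leq_trans (Ht _ le_Nl) (leq_addr _ _).
exact: leq_trans (leq_bigmax (F := fun i : 'I_N => t i) (Ordinal lt_lN)) (leq_addl _ _).
Qed.

Lemma pigeonhole_rel (X Y : finType) (R : X -> Y -> Prop) :
  (#|Y| < #|X|)%N -> (forall x, exists y, R x y) ->
  exists x x' y, [/\ x != x', R x y & R x' y].
Proof.
move=> ltYX totR.
pose F x := proj1_sig (constructive_indefinite_description _ (totR x)).
have RF x : R x (F x) := proj2_sig (constructive_indefinite_description _ _).
have /injectivePn [x [x' neq EF]] : ~~ injectiveb F.
  by apply: contraL ltYX => /injectiveP/leq_card; rewrite leqNgt.
by exists x, x', (F x); split; rewrite // EF.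
Qed.

Section Words.
Variables (T : Type) (m : nat) (h : 'I_m -> T).

Definition word_of (p : 'I_m -> nat) : seq T :=
  flatten [seq nseq (p i) (h i) | i <- enum 'I_m].

Lemma count_word_of (a : pred T) p :
  count a (word_of p) = (\sum_(i < m) a (h i) * p i)%N.
Proof.
rewrite count_flatten -map_comp sumnE big_map big_enum /=.
by apply: eq_bigr => i _; rewrite count_nseq.
Qed.

Lemma size_word_of_le p n : (forall i, p i <= n)%N -> (size (word_of p) <= m * n)%N.
Proof.
move=> le_pn; rewrite -count_predT count_word_of.
rewrite -[m in (_ <= m * n)%N]card_ord -sum_nat_const.
by apply: leq_sum => i _; rewrite mul1n.
Qed.

End Words.

Lemma count_mem_word_of (T : eqType) m (h : 'I_m -> T) p i :
  injective h -> count_mem (h i) (word_of h p) = p i.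
Proof.
move=> h_inj; rewrite count_word_of (bigD1 i) //= eqxx mul1n big1 ?addn0 //.
by move=> j /negbTE ne_ji; rewrite /= (inj_eq h_inj) ne_ji.
Qed.

Lemma count_mem_word_of_notin (T : eqType) m (h : 'I_m -> T) p y :
  (forall i, h i != y) -> count_mem y (word_of h p) = 0%N.
Proof. by move=> h_y; rewrite count_word_of big1 // => i _; rewrite /= (negbTE (h_y i)). Qed.

Lemma balanced_word_of_cat m (p p' : 'I_m -> nat) :
  balanced (word_of inl p ++ word_of inr p') <-> p =1 p'.
Proof.
have countE i : count_mem (inl i) (word_of inl p ++ word_of inr p') = p i /\
                count_mem (inr i) (word_of inl p ++ word_of inr p') = p' i.
  rewrite !count_cat !count_mem_word_of ?count_mem_word_of_notin ?addn0 //.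
  - exact: inr_inj.
  - exact: inl_inj.
split=> [bal i|pp' i]; have [cl cr] := countE i.
- by rewrite -cl -cr bal.
- by rewrite cl cr pp'.
Qed.

Section RegisterBound.
Variables (k : nat) (Sigma : finType) (A : gautomaton 'rV[int]_k Sigma).

Definition gdelta_bounded (M : nat) : Prop :=
  forall q o q1 m, (q1, m) \in gdelta A q o -> forall j, (absz (m ord0 j) <= M)%N.

Lemma exists_gdelta_bounded : exists M, gdelta_bounded M.
Proof.
exists (\max_q \max_o \max_(p <- gdelta A q o) \max_j absz (p.2 ord0 j))%N.
move=> q o q1 m qm_in j.
apply: leq_trans (leq_bigmax q); apply: leq_trans (leq_bigmax o).
apply: leq_trans (leq_bigmax_seq _ qm_in _) => //.
exact: (leq_bigmax (F := fun j => absz (m ord0 j))).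
Qed.

Variable M : nat.
Hypothesis A_M : gdelta_bounded M.

Lemma grun_coord_bound q x w n q' x' : grun A q x w n q' x' ->
  forall j, (absz (x' ord0 j) <= absz (x ord0 j) + n * M)%N.
Proof.
elim=> [q0 x0|q0 x0 w0 n0 q1 m q2 x2 Hm _ IH|q0 x0 a w0 n0 q1 m q2 x2 Hm _ IH] j.
- by rewrite mul0n addn0.
- have := IH j; have := A_M Hm j; rewrite !mxE mulSn.
  move: (n0 * M)%N (x0 ord0 j) (m ord0 j) (x2 ord0 j) => K y0 d y2; lia.
- have := IH j; have := A_M Hm j; rewrite !mxE mulSn.
  move: (n0 * M)%N (x0 ord0 j) (m ord0 j) (x2 ord0 j) => K y0 d y2; lia.
Qed.

Lemma gaccepts_in_cat_midpoint u v s : gaccepts_in A (u ++ v) s ->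
  exists q (x : 'rV[int]_k), [/\ forall j, (absz (x ord0 j) <= s * M)%N,
                  exists s1, grun A (ginit A) 0%R u s1 q x &
                  exists s2 q', grun A q x v s2 q' 0%R /\ q' \in gacc A].
Proof.
case=> qf [/grun_split [s1 [s2 [q [x [-> R1 R2]]]]] acc_qf].
exists q, x; split; [|by exists s1|by exists s2, qf].
move=> j; have := grun_coord_bound R1 j; rewrite mxE add0n => /leq_trans; apply.
by rewrite leq_mul2r leq_addr orbT.
Qed.

End RegisterBound.

Definition row_code k B (v : 'rV[int]_k) : {ffun 'I_k -> 'I_(2 * B).+1} :=
  [ffun j => inord (absz (v ord0 j + B%:Z)%R)].

Lemma row_code_inj k B (v v' : 'rV[int]_k) :
  (forall j, absz (v ord0 j) <= B)%N -> (forall j, absz (v' ord0 j) <= B)%N ->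
  row_code B v = row_code B v' -> v = v'.
Proof.
move=> vB v'B /ffunP codeE; apply/matrixP=> i j; rewrite [i]ord1.
have := congr1 val (codeE j); rewrite !ffunE /=.
move: (vB j) (v'B j); move: (v ord0 j) (v' ord0 j) => a b aB bB.
by rewrite !inordK; lia.
Qed.

Lemma mul_expn_ltn_expnS Q E n b k :
  n = (Q * E ^ k)%N -> (b <= n.+1 * E)%N -> (Q * b ^ k < n.+1 ^ k.+1)%N.
Proof.
move=> nE b_le.
have bk_le : (b ^ k <= n.+1 ^ k * E ^ k)%N.
  by rewrite -expnMn; elim: k {nE} => // k IH; rewrite !expnS leq_mul.
rewrite expnS; apply: (@leq_ltn_trans (Q * (n.+1 ^ k * E ^ k))).
  by rewrite leq_mul2l bk_le orbT.
by rewrite mulnCA -nE mulnC ltn_pmul2r ?expn_gt0.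
Qed.

Lemma balanced_notin_Lw_On k : ~ in_Lw_On 'rV[int]_k (@balanced k.+1).
Proof.
case=> A [t [/bigO_n_affine [c [D t_le]] [recA timeA]]].
have [M A_M] := exists_gdelta_bounded A.
(* After reading a^p, with all p_i <= n, the register coordinates are at most
   B; E is chosen so that 2 B + 1 <= (n + 1) E. *)
pose E := (4 * M * c * k.+1 + 2 * M * D + 1)%N.
pose n := (#|gstate A| * E ^ k)%N.
pose B := ((c * (2 * (k.+1 * n)) + D) * M)%N.
pose aw (p : {ffun 'I_k.+1 -> 'I_n.+1}) := word_of (@inl _ 'I_k.+1) (fun i => p i).
pose bw (p : {ffun 'I_k.+1 -> 'I_n.+1}) := word_of (@inr 'I_k.+1 _) (fun i => p i).
pose R p (cfg : gstate A * {ffun 'I_k -> 'I_(2 * B).+1}) :=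
  exists x : 'rV[int]_k, [/\ forall j, (absz (x ord0 j) <= B)%N, cfg.2 = row_code B x,
                exists s1, grun A (ginit A) 0%R (aw p) s1 cfg.1 x &
                exists s2 q', grun A cfg.1 x (bw p) s2 q' 0%R /\ q' \in gacc A].
have totR p : exists cfg, R p cfg.
  have /timeA [s [s_le acc]] : balanced (aw p ++ bw p) by apply/balanced_word_of_cat.
  have [q [x [xB run1 run2]]] := gaccepts_in_cat_midpoint A_M acc.
  have size_le (h : 'I_k.+1 -> 'I_k.+1 + 'I_k.+1) :
    (size (word_of h (fun i => p i)) <= k.+1 * n)%N.
    by apply: size_word_of_le => i; rewrite -ltnS.
  have sB : (s * M <= B)%N.
    rewrite leq_mul2r (leq_trans s_le (leq_trans (t_le _) _)) ?orbT //.
    by rewrite leq_add2r leq_mul2l size_cat mul2n -addnn (leq_add (size_le _) (size_le _)) orbT.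
  by exists (q, row_code B x), x; split=> // j; apply: leq_trans (xB j) sB.
have card_lt : (#|{: gstate A * {ffun 'I_k -> 'I_(2 * B).+1}}| <
                #|{: {ffun 'I_k.+1 -> 'I_n.+1}}|)%N.
  rewrite card_prod !card_ffun !card_ord; apply: mul_expn_ltn_expnS (erefl n) _.
  by rewrite /E /B; nia.
have [p [p' [[q code] [ne_pp' [x [xB Ex [s1 run1] _]] [x' [x'B Ex' _ run2]]]]]] :=
  pigeonhole_rel card_lt totR.
have ex' : x = x' by apply: (row_code_inj xB x'B); rewrite -Ex -Ex'.
have [s2 [q' [run2' acc]]] := run2; rewrite -ex' /= in run2'.
have : balanced (aw p ++ bw p').
  by apply/recA; exists (s1 + s2)%N, q'; split=> //; apply: grun_cat run1 run2'.
move/balanced_word_of_cat => pp'; case/eqP: ne_pp'.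
by apply/ffunP => i; apply/val_inj/pp'.
Qed.

Theorem theorem4p11 (k : nat) (hk : (1 <= k)%N) :
  (forall (Sigma : finType) (L : seq Sigma -> Prop),
      in_Lw_On 'rV[int]_k L -> in_Lw_On 'rV[int]_k.+1 L) /\
  (exists (Sigma : finType) (L : seq Sigma -> Prop),
      in_Lw_On 'rV[int]_k.+1 L /\ ~ in_Lw_On 'rV[int]_k L).
Proof.
split=> [Sigma L|].
  exact: in_Lw_On_injmorph (@row_shiftD int k) (@row_shift_inj int k).
exists _, (@balanced k.+1).
split; [exact: balanced_in_Lw_On | exact: balanced_notin_Lw_On].
Qed.
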